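(* For any $\mathbf{V}\in\mathbb{R}^{N\times N}$ with $\mathbf{V}\boldsymbol\mu=\boldsymbol\mu$, any $k\in[N]$ and any $t\in[T]$, $$\mathbb{E}[V_{x_o,x_t}\mid x_{T+1}=k]=q^{(k)}_t\langle\mathbf{V},\mathbf{P}\rangle_\mu+(1-q^{(k)}_t)\|\boldsymbol\mu\|^2.$$
   Context: Let $\mathbf{P}\in\mathbb{R}^{N\times N}$ have nonnegative entries with columns summing to $1$, and let $\boldsymbol\mu\in\mathbb{R}^N$ be a probability vector with $\mathbf{P}\boldsymbol\mu=\boldsymbol\mu$. Let $\mathbf{q}^{(1)},\dots,\mathbf{q}^{(N)}$ be probability vectors in $\mathbb{R}^T$. Random variables: $x_1,\dots,x_{T+1}$ i.i.d. with law $\boldsymbol\mu$ on $[N]$, and $x_o\in[N]$ with $\Pr(x_o=n\mid x_{T+1}=k,x_1,\dots,x_T)=\sum_{s=1}^Tq^{(k)}_sP_{n,x_s}$. For matrices $\mathbf{M},\mathbf{M}'$ with $N$ columns, $\langle\mathbf{M},\mathbf{M}'\rangle_\mu=\operatorname{Tr}(\mathbf{M}\operatorname{diag}(\boldsymbol\mu)\mathbf{M}'^\top)$; $\|\boldsymbol\mu\|$ is the Euclidean norm. *)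

From HB Require Import structures.
From mathcomp Require Import all_boot all_order all_algebra.
Set Implicit Arguments. Unset Strict Implicit. Unset Printing Implicit Defensive.
Import Order.TTheory GRing.Theory Num.Theory.
Local Open Scope ring_scope.

(* Indices: [N] = 'I_N, [T] = 'I_T (0-based).
   Sample space: (xs, xT1, xo) with xs : {ffun 'I_T -> 'I_N} = (x_1,...,x_T),
   xT1 = x_{T+1}, xo = x_o. *)

(* joint pmf: prod_s mu(x_s) * mu(x_{T+1}) * Pr(x_o = xo | x_{T+1}, x_1..x_T) *)
Definition joint (R : nzRingType) (N T : nat) (P : 'M[R]_N) (mu : 'cV[R]_N)
    (q : 'I_N -> 'cV[R]_T) (xs : {ffun 'I_T -> 'I_N}) (xT1 xo : 'I_N) : R :=
  (\prod_(s < T) mu (xs s) 0) * mu xT1 0 * (\sum_(s < T) q xT1 s 0 * P xo (xs s)).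

Definition cond_exp (R : fieldType) (N T : nat) (P : 'M[R]_N) (mu : 'cV[R]_N)
    (q : 'I_N -> 'cV[R]_T)
    (f : {ffun 'I_T -> 'I_N} -> 'I_N -> 'I_N -> R) (k : 'I_N) : R :=
  (\sum_(xs : {ffun 'I_T -> 'I_N}) \sum_(xT1 < N) \sum_(xo < N)
      (if xT1 == k then f xs xT1 xo * joint P mu q xs xT1 xo else 0))
  / (\sum_(xs : {ffun 'I_T -> 'I_N}) \sum_(xT1 < N) \sum_(xo < N)
      (if xT1 == k then joint P mu q xs xT1 xo else 0)).

Definition mu_inner (R : nzRingType) (N : nat) (mu : 'cV[R]_N) (M M' : 'M[R]_N) : R :=
  \tr (M *m diag_mx mu^T *m M'^T).

Definition enorm (R : rcfType) (N : nat) (v : 'cV[R]_N) : R :=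
  Num.sqrt (\sum_(i < N) v i 0 ^+ 2).

From HB Require Import structures.
From mathcomp Require Import all_boot all_order all_algebra.
From mathcomp Require Import ring.
Set Implicit Arguments. Unset Strict Implicit. Unset Printing Implicit Defensive.
Import Order.TTheory GRing.Theory Num.Theory.
Local Open Scope ring_scope.

(* Conditionally on x_{T+1} = k, the law of x_o is the mixture over s of the
   laws P(., x_s) with weights q^(k)_s.  For the s = t component, V_{x_o,x_t}
   averages to <V, P>_mu; for s <> t, x_t is independent of x_s, and the
   stationarity of mu under V and P turns the average into sum_o mu_o^2. *)

Section IIDExpectation.

Variables (R : comNzRingType) (N T : nat) (mu : 'I_N -> R).

Definition iid_expect (F : {ffun 'I_T -> 'I_N} -> R) : R :=
  \sum_(xs : {ffun 'I_T -> 'I_N}) (\prod_(s < T) mu (xs s)) * F xs.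

Lemma iid_expect_prod (f : 'I_T -> 'I_N -> R) :
  iid_expect (fun xs => \prod_(s < T) f s (xs s))
  = \prod_(s < T) \sum_(j < N) mu j * f s j.
Proof.
rewrite bigA_distr_bigA; apply: eq_bigr => xs _.
by rewrite big_split.
Qed.

Lemma prod_if_eq (v : 'I_T) (x : R) :
  \prod_(s < T) (if s == v then x else 1) = x.
Proof. by rewrite -big_mkcond big_pred1_eq. Qed.

Hypothesis mu_sum1 : \sum_(j < N) mu j = 1.

Lemma iid_expect_pair (t u : 'I_T) (g h : 'I_N -> R) :
  iid_expect (fun xs => g (xs t) * h (xs u))
  = if t == u then \sum_(j < N) mu j * (g j * h j)
    else (\sum_(j < N) mu j * g j) * (\sum_(j < N) mu j * h j).
Proof.
pose f s j := (if s == t then g j else 1) * (if s == u then h j else 1).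
have -> : iid_expect (fun xs => g (xs t) * h (xs u))
          = iid_expect (fun xs => \prod_(s < T) f s (xs s)).
  apply: eq_bigr => xs _; congr (_ * _); rewrite big_split /=.
  by rewrite -!big_mkcond !big_pred1_eq.
have mu_sum1r : \sum_(j < N) mu j * 1 = 1.
  by under eq_bigr do rewrite mulr1.
rewrite iid_expect_prod /f; have [<- | ne_tu] := eqVneq t u.
  rewrite -[RHS](prod_if_eq t); apply: eq_bigr => s _.
  by case: eqP => _; under eq_bigr do rewrite ?mul1r.
rewrite -[X in X * _](prod_if_eq t) -[X in _ * X](prod_if_eq u) -big_split /=.
apply: eq_bigr => s _.
have [-> | ne_st] := eqVneq s t.
  by rewrite (negbTE ne_tu) mulr1; under eq_bigr do rewrite mulr1.
by case: eqP => _; under eq_bigr do rewrite mul1r; rewrite mul1r.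
Qed.

End IIDExpectation.

Section ConditionalExpectation.

Variables (R : fieldType) (N T : nat) (P : 'M[R]_N) (mu : 'cV[R]_N).
Variable q : 'I_N -> 'cV[R]_T.
Variable k : 'I_N.

Let iidE := @iid_expect R N T (fun j => mu j 0).

Lemma sum_joint_condE (f : {ffun 'I_T -> 'I_N} -> 'I_N -> R) :
  \sum_(xs : {ffun 'I_T -> 'I_N}) \sum_(x1 < N) \sum_(xo < N)
    (if x1 == k then f xs xo * joint P mu q xs x1 xo else 0)
  = mu k 0 * \sum_(s < T) q k s 0 *
      \sum_(o < N) iidE (fun xs => f xs o * P o (xs s)).
Proof.
transitivity (\sum_(xs : {ffun 'I_T -> 'I_N}) \sum_(o < N) \sum_(s < T)
   mu k 0 * q k s 0 * ((\prod_(s0 < T) mu (xs s0) 0) * (f xs o * P o (xs s)))).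
  apply: eq_bigr => xs _; rewrite (bigD1 k) //= [X in _ + X]big1 ?addr0; last first.
    by move=> x1 /negbTE ne_k; apply: big1 => o _; rewrite ne_k.
  apply: eq_bigr => o _; rewrite eqxx /joint !mulr_sumr.
  by apply: eq_bigr => s _; ring.
rewrite exchange_big /=; under eq_bigr do rewrite exchange_big /=.
rewrite exchange_big mulr_sumr; apply: eq_bigr => s _ /=.
rewrite mulrA mulr_sumr; apply: eq_bigr => o _.
by rewrite /iidE /iid_expect mulr_sumr.
Qed.

Hypothesis P_colsum1 : forall j, \sum_(i < N) P i j = 1.
Hypothesis mu_sum1 : \sum_(i < N) mu i 0 = 1.
Hypothesis q_sum1 : \sum_(s < T) q k s 0 = 1.

Lemma sum_joint_cond1 :
  \sum_(xs : {ffun 'I_T -> 'I_N}) \sum_(x1 < N) \sum_(xo < N)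
    (if x1 == k then joint P mu q xs x1 xo else 0) = mu k 0.
Proof.
have inner_sum1 s : \sum_(o < N) iidE (fun xs => 1 * P o (xs s)) = 1.
  under eq_bigr => o _ do
    rewrite /iidE (iid_expect_pair mu_sum1 s s (fun _ => 1) (P o)) eqxx.
  rewrite exchange_big -[RHS]mu_sum1; apply: eq_bigr => j _ /=.
  by under eq_bigr do rewrite mul1r; rewrite -mulr_sumr P_colsum1 mulr1.
under eq_bigr do under eq_bigr do under eq_bigr do
  rewrite -[joint _ _ _ _ _ _]mul1r.
rewrite (sum_joint_condE (fun _ _ => 1)).
by under eq_bigr do rewrite inner_sum1 mulr1; rewrite q_sum1 mulr1.
Qed.

Lemma cond_exp_mixture (f : {ffun 'I_T -> 'I_N} -> 'I_N -> R) :
  mu k 0 != 0 ->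
  cond_exp P mu q (fun xs _ xo => f xs xo) k
  = \sum_(s < T) q k s 0 * \sum_(o < N) iidE (fun xs => f xs o * P o (xs s)).
Proof.
by move=> muk; rewrite /cond_exp sum_joint_condE sum_joint_cond1 mulrC mulKf.
Qed.

End ConditionalExpectation.

Lemma mu_innerE (R : comNzRingType) (N : nat) (mu : 'cV[R]_N) (M M' : 'M[R]_N) :
  mu_inner mu M M' = \sum_(i < N) \sum_(j < N) mu j 0 * M i j * M' i j.
Proof.
apply: eq_bigr => i _; rewrite mxE; apply: eq_bigr => j _.
by rewrite mul_mx_diag !mxE; ring.
Qed.

Lemma enorm_sqr (R : rcfType) (N : nat) (v : 'cV[R]_N) :
  enorm v ^+ 2 = \sum_(i < N) v i 0 ^+ 2.
Proof. by rewrite sqr_sqrtr // sumr_ge0 // => i _; rewrite sqr_ge0. Qed.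

Lemma fixed_col_row_mean (R : comNzRingType) (N : nat) (M : 'M[R]_N) (v : 'cV[R]_N) i :
  M *m v = v -> \sum_(j < N) v j 0 * M i j = v i 0.
Proof.
by move=> Mv; rewrite -{2}Mv mxE; apply: eq_bigr => j _; rewrite mulrC.
Qed.

Theorem lemmaB6 (R : rcfType) (N T : nat) (P : 'M[R]_N) (mu : 'cV[R]_N)
    (q : 'I_N -> 'cV[R]_T) :
  (forall i j, 0 <= P i j) ->
  (forall j, \sum_(i < N) P i j = 1) ->
  (forall i, 0 <= mu i 0) ->
  \sum_(i < N) mu i 0 = 1 ->
  P *m mu = mu ->
  (forall k s, 0 <= q k s 0) ->
  (forall k, \sum_(s < T) q k s 0 = 1) ->
  forall (V : 'M[R]_N), V *m mu = mu ->
  forall (k : 'I_N) (t : 'I_T), 0 < mu k 0 ->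
  cond_exp P mu q (fun xs _ xo => V xo (xs t)) k
  = q k t 0 * mu_inner mu V P + (1 - q k t 0) * enorm mu ^+ 2.
Proof.
move=> _ P_colsum1 _ mu_sum1 Pmu _ q_sum1 V Vmu k t mu_k_gt0.
rewrite (cond_exp_mixture P_colsum1 mu_sum1 (q_sum1 k)
  (fun xs xo => V xo (xs t))) ?gt_eqF //.
have one_sub_q : 1 - q k t 0 = \sum_(s < T | s != t) q k s 0.
  by rewrite -(q_sum1 k) (bigD1 t) //= addrC addrK.
rewrite mu_innerE enorm_sqr one_sub_q mulr_suml (bigD1 t) //=; congr (_ + _).
  congr (_ * _); apply: eq_bigr => o _.
  by rewrite iid_expect_pair // eqxx; apply: eq_bigr => j _; rewrite mulrA.
apply: eq_bigr => s ne_st; congr (_ * _); apply: eq_bigr => o _.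
rewrite iid_expect_pair // eq_sym (negbTE ne_st).
by rewrite !fixed_col_row_mean.
Qed.
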